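(* Let $A$ be a commutative DGA and $\lambda=(0\to Z\to\widetilde L\xrightarrow{\pi}L\to0)$ an MC-product data. Let $\alpha\in A^+\otimes L$ be a defining system and $X\in(A^+\otimes L)^0$. Then $\exp X\cdot\alpha$ is again a defining system and $m(\exp X\cdot\alpha)=m(\alpha)$.
   Context: All algebras are over $\mathbb{Q}$. A commutative DGA $(A,d)$ is a graded-commutative algebra $A=\bigoplus_{i\ge0}A^i$ with a degree $+1$ derivation $d$, $d^2=0$. Write $A^+=\bigoplus_{i>0}A^i$. A DGLA is a graded Lie algebra with a degree $+1$ differential which is a derivation. It is nilpotent if its lower central series terminates at $0$. For a DGLA $(L,d_L)$, $A\otimes L$ is the DGLA with total grading, bracket $[b_1\otimes w_1,b_2\otimes w_2]=(-1)^{|w_1||b_2|}b_1b_2\otimes[w_1,w_2]$ and differential $d(b\otimes w)=d_Ab\otimes w+(-1)^{|b|}b\otimes d_Lw$. For degree-one $\alpha$ put $F(\alpha)=d\alpha+\tfrac12[\alpha,\alpha]$; $\alpha$ is a Maurer–Cartan element if $F(\alpha)=0$. For a nilpotent DGLA $\Lambda$ and $X\in\Lambda^0$, the gauge action is $(\exp X)\cdot\alpha=\alpha-\sum_{i\ge0}\frac{(\operatorname{ad}X)^i}{(i+1)!}(dX+[\alpha,X])$. An MC-product data consists of: - a central extension $0\to Z\to\widetilde L\xrightarrow{\pi}L\to0$ of nilpotent DGLAs (differentials $\tilde d_L$, $d_L$) concentrated in nonpositive degrees, with $Z\subseteq\ker\tilde d_L$ and $\operatorname{Im}\tilde d_L\cap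 Z=0$; - an isomorphism $Z\cong\mathbb{Q}[q]$ ($q\le0$). A defining system is an MC element $\alpha\in A^+\otimes L$. For any degree-one lift $\tilde\alpha\in A^+\otimes\widetilde L$, $F(\tilde\alpha)\in A^+\otimes Z\cong A^+[q]$ is a cocycle of degree $2-q$ in $A$. Its class $m(\alpha)\in H^{2-q}(A)$ is independent of the lift and is the MC higher product. *)

From HB Require Import structures.
From mathcomp Require Import all_boot all_order all_algebra.
Set Implicit Arguments. Unset Strict Implicit. Unset Printing Implicit Defensive.
Import Order.TTheory GRing.Theory Num.Theory.
Local Open Scope ring_scope.

(* A graded vector space is modelled as a
   single carrier V (the direct sum) together with a predicate
   [deg i v] : "v is homogeneous of degree i", subject to the direct-sum axioms. *)

Definition sgn (n : int) : rat := (-1) ^ n.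

Definition is_linear (U V : lmodType rat) (f : U -> V) : Prop :=
  forall (r : rat) (u v : U), f (r *: u + v) = r *: f u + f v.

Definition is_bilinear (U W V : lmodType rat) (f : U -> W -> V) : Prop :=
  (forall u, is_linear (f u)) /\ (forall w, is_linear (fun u => f u w)).

Definition span (V : lmodType rat) (P : V -> Prop) (v : V) : Prop :=
  exists s : seq (rat * V), (forall p, p \in s -> P p.2) /\
    v = \sum_(p <- s) p.1 *: p.2.

Definition is_graded (V : lmodType rat) (deg : int -> V -> Prop) : Prop :=
  [/\ (forall i, deg i 0),
      (forall i (r : rat) u v, deg i u -> deg i v -> deg i (r *: u + v)),
      (forall v : V, exists s : seq (int * V),
          (forall p, p \in s -> deg p.1 p.2) /\ v = \sum_(p <- s) p.2) &
      (forall s : seq (int * V), uniq (map fst s) ->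
          (forall p, p \in s -> deg p.1 p.2) -> \sum_(p <- s) p.2 = 0 ->
          forall p, p \in s -> p.2 = 0)].

Definition is_cdga (A : lmodType rat) (deg : int -> A -> Prop)
    (mul : A -> A -> A) (one : A) (d : A -> A) : Prop :=
  [/\ is_graded deg,
      (forall i a, i < 0 -> deg i a -> a = 0),
      is_bilinear mul,
      (forall a b c, mul a (mul b c) = mul (mul a b) c) &
      [/\ deg 0 one, (forall a, mul one a = a) & (forall a, mul a one = a)]] /\
  [/\ (forall i j a b, deg i a -> deg j b -> deg (i + j) (mul a b)),
      (forall i j a b, deg i a -> deg j b -> mul a b = sgn (i * j) *: mul b a) &
      [/\ is_linear d, (forall i a, deg i a -> deg (i + 1) (d a)),
          (forall a, d (d a) = 0) &
          (forall i a b, deg i a -> d (mul a b) = mul (d a) b + sgn i *: mul a (d b))]].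

Definition is_dgla (L : lmodType rat) (deg : int -> L -> Prop)
    (br : L -> L -> L) (d : L -> L) : Prop :=
  [/\ is_graded deg,
      is_bilinear br,
      (forall i j x y, deg i x -> deg j y -> deg (i + j) (br x y)),
      (forall i j x y, deg i x -> deg j y -> br x y = - (sgn (i * j) *: br y x)) &
      (forall i j x y z, deg i x -> deg j y ->
          br x (br y z) = br (br x y) z + sgn (i * j) *: br y (br x z))] /\
      [/\ is_linear d, (forall i x, deg i x -> deg (i + 1) (d x)),
          (forall x, d (d x) = 0) &
          (forall i x y, deg i x -> d (br x y) = br (d x) y + sgn i *: br x (d y))].

Fixpoint lcs (L : lmodType rat) (br : L -> L -> L) (k : nat) : L -> Prop :=
  match k with
  | 0 => fun _ => True
  | k'.+1 => span (fun v => exists x y, lcs br k' y /\ v = br x y)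
  end.

Definition nilpotent (L : lmodType rat) (br : L -> L -> L) : Prop :=
  exists k, forall v, lcs br k v -> v = 0.

Definition concentrated_nonpos (L : lmodType rat) (deg : int -> L -> Prop) : Prop :=
  forall i v, 0 < i -> deg i v -> v = 0.

Definition is_dgla_morphism (L1 L2 : lmodType rat)
    (deg1 : int -> L1 -> Prop) (br1 : L1 -> L1 -> L1) (d1 : L1 -> L1)
    (deg2 : int -> L2 -> Prop) (br2 : L2 -> L2 -> L2) (d2 : L2 -> L2)
    (f : L1 -> L2) : Prop :=
  [/\ is_linear f, (forall i x, deg1 i x -> deg2 i (f x)),
      (forall x y, f (br1 x y) = br2 (f x) (f y)) &
      (forall x, f (d1 x) = d2 (f x))].

Definition is_tensor (A L T : lmodType rat) (t : A -> L -> T) : Prop :=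
  is_bilinear t /\
  forall (V : lmodType rat) (f : A -> L -> V), is_bilinear f ->
    exists g : T -> V, [/\ is_linear g, (forall a w, g (t a w) = f a w) &
      (forall h : T -> V, is_linear h -> (forall a w, h (t a w) = f a w) ->
          forall x, h x = g x)].

Definition is_tensor_dgla (A L T : lmodType rat)
    (degA : int -> A -> Prop) (mulA : A -> A -> A) (dA : A -> A)
    (degL : int -> L -> Prop) (brL : L -> L -> L) (dL : L -> L)
    (t : A -> L -> T) (brT : T -> T -> T) (dT : T -> T) : Prop :=
  [/\ is_bilinear brT, is_linear dT,
      (forall i1 j1 i2 j2 b1 w1 b2 w2, degA i1 b1 -> degL j1 w1 ->
          degA i2 b2 -> degL j2 w2 ->
          brT (t b1 w1) (t b2 w2) = sgn (j1 * i2) *: t (mulA b1 b2) (brL w1 w2)) &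
      (forall i j b w, degA i b -> degL j w ->
          dT (t b w) = t (dA b) w + sgn i *: t b (dL w))].

(* x lies in (A^+ (x) L)^n, i.e. in the span of the b (x) w with
   b in A^i, i > 0, w in L^j, i + j = n *)
Definition tdeg_pos (A L T : lmodType rat)
    (degA : int -> A -> Prop) (degL : int -> L -> Prop) (t : A -> L -> T)
    (n : int) (x : T) : Prop :=
  span (fun v => exists i j a w,
           [/\ 0 < i, i + j = n, degA i a, degL j w & v = t a w]) x.

Definition MC_F (T : lmodType rat) (brT : T -> T -> T) (dT : T -> T) (x : T) : T :=
  dT x + 2%:R^-1 *: brT x x.

Definition defining_system (A L T : lmodType rat)
    (degA : int -> A -> Prop) (degL : int -> L -> Prop) (t : A -> L -> T)
    (brT : T -> T -> T) (dT : T -> T) (x : T) : Prop :=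
  tdeg_pos degA degL t 1 x /\ MC_F brT dT x = 0.

(* gauge action, series truncated after N terms (N chosen so that
   (ad X)^N (dX + [alpha, X]) = 0, whence all later terms vanish) *)
Definition gauge (T : lmodType rat) (brT : T -> T -> T) (dT : T -> T)
    (N : nat) (X alpha : T) : T :=
  alpha - \sum_(i < N) ((i.+1)`!%:R^-1 : rat) *:
            iter i (brT X) (dT X + brT alpha X).

(* The gauge action is computed order by order in X.  Write exp X . alpha as the
   sum of b_0 = alpha and b_(k+1) = - (ad X)^k (dX + [alpha, X]) / (k+1)!, and let
   g_k = d b_k + 1/2 sum_(a+c=k) [b_a, b_c] be the part of F(exp X . alpha) of
   order k in X.  From (k+1) b_(k+1) = - (delta_k0 dX + [b_k, X]), the graded Jacobi
   identity and the Leibniz rule one gets (k+1) g_(k+1) = [X, g_k]; hence, as soon as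
   [X, F(alpha)] = 0, F(exp X . alpha) = g_0 = F(alpha).  For alpha an MC element this
   shows that exp X . alpha is a defining system.  For the product, lift X and alpha
   to A^+ (x) L~: there F(alpha~) = c (x) z is central, so F(exp X~ . alpha~) = c (x) z
   (nilpotency of L~ keeps the series finite).  Any lift of exp X . alpha differs from
   exp X~ . alpha~ by an element of ker (id (x) pi) = A (x) z, i.e. by b (x) z with
   b of degree 1 - q, and adding b (x) z changes F by db (x) z.  Coefficients along z
   are read off with a functional phi, phi z = 1, vanishing on the other homogeneous
   components of L~; it exists by Zorn's lemma. *)

From mathcomp Require Import all_boot all_order all_algebra.
From mathcomp Require Import ring zify.
From mathcomp Require boolp classical_sets.
Set Implicit Arguments. Unset Strict Implicit. Unset Printing Implicit Defensive.
Import GRing.Theory Num.Theory.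
Local Open Scope ring_scope.

Lemma sgn0 : sgn 0 = 1. Proof. by []. Qed.

Lemma sgn1 : sgn 1 = -1. Proof. by rewrite /sgn expr1z. Qed.

Lemma sgnD (a b : int) : sgn (a + b) = sgn a * sgn b.
Proof. by rewrite /sgn expfzDr // oppr_eq0 oner_eq0. Qed.

Lemma sgnS (a : int) : sgn (a + 1) = - sgn a.
Proof. by rewrite sgnD sgn1 mulrN1. Qed.

Lemma sgn_parity (a b k : int) : a = b + 2 * k -> sgn a = sgn b.
Proof.
move=> ->; rewrite sgnD [sgn (2 * k)]/sgn -exprz_exp -exprnP expr2 mulrNN mulr1.
by rewrite exp1rz mulr1.
Qed.

Section LinearMaps.
Variables (U V : lmodType rat) (f : U -> V).
Hypothesis f_linear : is_linear f.

Lemma linD u v : f (u + v) = f u + f v.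
Proof. by have := f_linear 1 u v; rewrite !scale1r. Qed.

Lemma lin0 : f 0 = 0.
Proof. by apply: (@addrI _ (f 0)); rewrite -linD !addr0. Qed.

Lemma linZ r u : f (r *: u) = r *: f u.
Proof. by rewrite -[r *: u]addr0 f_linear lin0 addr0. Qed.

Lemma linN u : f (- u) = - f u.
Proof. by rewrite -scaleN1r linZ scaleN1r. Qed.

Lemma linB u v : f (u - v) = f u - f v.
Proof. by rewrite linD linN. Qed.

Lemma lin_sum (I : Type) (r : seq I) (P : pred I) (F : I -> U) :
  f (\sum_(i <- r | P i) F i) = \sum_(i <- r | P i) f (F i).
Proof. exact: (big_morph f linD lin0). Qed.

End LinearMaps.

Lemma is_linear_id (U : lmodType rat) : is_linear (fun x : U => x).
Proof. by []. Qed.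

Lemma is_linear0 (U V : lmodType rat) : is_linear (fun _ : U => 0 : V).
Proof. by move=> r u v; rewrite scaler0 addr0. Qed.

Lemma is_linear_comp (U V W : lmodType rat) (f : U -> V) (g : V -> W) :
  is_linear f -> is_linear g -> is_linear (fun x => g (f x)).
Proof. by move=> hf hg r u v; rewrite hf hg. Qed.

Lemma is_linear_add (U V : lmodType rat) (f g : U -> V) :
  is_linear f -> is_linear g -> is_linear (fun x => f x + g x).
Proof. by move=> hf hg r u v; rewrite hf hg scalerDr addrACA. Qed.

Lemma is_linear_scale (U V : lmodType rat) (c : rat) (f : U -> V) :
  is_linear f -> is_linear (fun x => c *: f x).
Proof. by move=> hf r u v; rewrite hf scalerDr !scalerA mulrC. Qed.

Lemma is_linear_opp (U V : lmodType rat) (f : U -> V) :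
  is_linear f -> is_linear (fun x => - f x).
Proof. by move=> hf r u v; rewrite hf opprD scalerN. Qed.

Section Span.
Variable V : lmodType rat.
Implicit Types (P Q : V -> Prop) (x y : V).

Lemma span_ind P (Q : V -> Prop) : Q 0 ->
  (forall r v y, P v -> Q y -> Q (r *: v + y)) -> forall x, span P x -> Q x.
Proof.
move=> Q0 QS x [s [Hs ->]]; elim: s Hs => [|p s IH] Hs; first by rewrite big_nil.
rewrite big_cons; apply: QS; first by apply: Hs; rewrite mem_head.
by apply: IH => p' hp'; apply: Hs; rewrite in_cons hp' orbT.
Qed.

Lemma span0 P : span P 0.
Proof. by exists [::]; rewrite big_nil. Qed.

Lemma span_cons P r v y : P v -> span P y -> span P (r *: v + y).
Proof.
move=> Pv [s [Hs ->]]; exists ((r, v) :: s); split; last by rewrite big_cons.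
by move=> p; rewrite in_cons => /orP[/eqP -> //|]; apply: Hs.
Qed.

Lemma span_gen P v : P v -> span P v.
Proof. by move=> Pv; rewrite -[v]scale1r -[_ *: v]addr0; apply: span_cons (span0 _). Qed.

Lemma spanZD P r x y : span P x -> span P y -> span P (r *: x + y).
Proof.
move=> sx; elim/span_ind: sx y => [|r' v x' Pv IH] y sy; first by rewrite scaler0 add0r.
by rewrite scalerDr scalerA -addrA; apply: span_cons => //; apply: IH.
Qed.

Lemma spanD P x y : span P x -> span P y -> span P (x + y).
Proof. by move=> sx sy; rewrite -[x]scale1r; apply: spanZD. Qed.

Lemma spanZ P r x : span P x -> span P (r *: x).
Proof. by move=> sx; rewrite -[_ *: x]addr0; apply: spanZD sx (span0 _). Qed.

Lemma spanN P x : span P x -> span P (- x).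
Proof. by rewrite -scaleN1r; apply: spanZ. Qed.

Lemma spanB P x y : span P x -> span P y -> span P (x - y).
Proof. by move=> sx sy; apply: spanD sx (spanN sy). Qed.

Lemma span_sum P (I : Type) (r : seq I) (Pr : pred I) (F : I -> V) :
  (forall i, Pr i -> span P (F i)) -> span P (\sum_(i <- r | Pr i) F i).
Proof.
move=> H; elim: r => [|i r IH]; first by rewrite big_nil; apply: span0.
by rewrite big_cons; case: ifP => // Pi; apply: spanD => //; apply: H.
Qed.

Lemma span_mono P Q x : (forall v, P v -> Q v) -> span P x -> span Q x.
Proof.
move=> PQ; elim/span_ind => [|r v y Pv sy]; first exact: span0.
by apply: span_cons => //; apply: PQ.
Qed.

End Span.

Lemma span_linear_image (U V : lmodType rat) (f : U -> V) P Q x :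
  is_linear f -> (forall v, P v -> span Q (f v)) -> span P x -> span Q (f x).
Proof.
move=> hf H; elim/span_ind => [|r v y Pv sy]; first by rewrite lin0 //; apply: span0.
by rewrite hf; apply: spanZD => //; apply: H.
Qed.

Lemma span_bilinear_image (U W V : lmodType rat) (br : U -> W -> V) P Q R x y :
  is_bilinear br -> (forall u v, P u -> Q v -> span R (br u v)) ->
  span P x -> span Q y -> span R (br x y).
Proof.
move=> [hb1 hb2] H sx sy.
apply: (span_linear_image (hb2 y) _ sx) => u Pu.
by apply: (span_linear_image (hb1 u) _ sy) => v Qv; apply: H.
Qed.

Lemma span_linear_eq (U V : lmodType rat) (f g : U -> V) P x :
  is_linear f -> is_linear g -> (forall v, P v -> f v = g v) -> span P x -> f x = g x.
Proof.
move=> hf hg H; elim/span_ind => [|r v y Pv IH]; first by rewrite !lin0.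
by rewrite hf hg IH H.
Qed.

Lemma span_bilinear_eq (U1 U2 V : lmodType rat) (f g : U1 -> U2 -> V) P Q x y :
  (forall y, is_linear (f^~ y)) -> (forall x, is_linear (f x)) ->
  (forall y, is_linear (g^~ y)) -> (forall x, is_linear (g x)) ->
  (forall u v, P u -> Q v -> f u v = g u v) -> span P x -> span Q y -> f x y = g x y.
Proof.
move=> f1 f2 g1 g2 H sx sy.
apply: (span_linear_eq (f1 y) (g1 y) _ sx) => u Pu.
by apply: (span_linear_eq (f2 u) (g2 u) _ sy) => v Qv; apply: H.
Qed.

Lemma span_trilinear_eq (U1 U2 U3 V : lmodType rat) (f g : U1 -> U2 -> U3 -> V)
    P Q R x y z :
  (forall y z, is_linear (fun x => f x y z)) -> (forall x z, is_linear (fun y => f x y z)) ->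
  (forall x y, is_linear (f x y)) ->
  (forall y z, is_linear (fun x => g x y z)) -> (forall x z, is_linear (fun y => g x y z)) ->
  (forall x y, is_linear (g x y)) ->
  (forall u v w, P u -> Q v -> R w -> f u v w = g u v w) ->
  span P x -> span Q y -> span R z -> f x y z = g x y z.
Proof.
move=> f1 f2 f3 g1 g2 g3 H sx sy sz.
apply: (span_linear_eq (f1 y z) (g1 y z) _ sx) => u Pu.
apply: (span_linear_eq (f2 u z) (g2 u z) _ sy) => v Qv.
by apply: (span_linear_eq (f3 u v) (g3 u v) _ sz) => w Rw; apply: H.
Qed.

Lemma big_antidiag_rev (V : nmodType) k (F : nat -> nat -> V) :
  \sum_(0 <= a < k.+1) F a (k - a)%N = \sum_(0 <= a < k.+1) F (k - a)%N a.
Proof.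
rewrite big_nat_rev; apply: eq_big_nat => a /andP[_ ha].
by rewrite add0n subSS subKn.
Qed.

Lemma big_antidiag_triangle (V : nmodType) (f : nat -> nat -> V) n :
  \sum_(0 <= k < n) \sum_(0 <= a < k.+1) f a (k - a)%N =
  \sum_(0 <= a < n) \sum_(0 <= c < n - a) f a c.
Proof.
elim: n => [|n IH]; first by rewrite !big_geq.
rewrite big_nat_recr //= IH.
have -> : \sum_(0 <= a < n.+1) \sum_(0 <= c < n.+1 - a) f a c =
   \sum_(0 <= a < n.+1) (\sum_(0 <= c < n - a) f a c + f a (n - a)%N).
  by apply: eq_big_nat => a /andP[_ ha]; rewrite subSn // big_nat_recr.
rewrite big_split /= [X in _ = X + _]big_nat_recr //= subnn.
by rewrite [\sum_(0 <= c < 0) _]big_geq // addr0.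
Qed.

Lemma big_square_antidiag (V : nmodType) (f : nat -> nat -> V) K :
  (forall a c, (K <= a)%N || (K <= c)%N -> f a c = 0) ->
  \sum_(0 <= a < K) \sum_(0 <= c < K) f a c =
  \sum_(0 <= k < K + K) \sum_(0 <= a < k.+1) f a (k - a)%N.
Proof.
move=> f0; rewrite big_antidiag_triangle (big_cat_nat _ (leq_addr K K)) //=.
rewrite [X in _ = _ + X]big1_seq ?addr0; last first.
  move=> a /andP[_]; rewrite mem_index_iota => /andP[Ka _].
  by apply: big1 => c _; apply: f0; rewrite Ka.
apply: eq_big_nat => a /andP[_ aK].
rewrite (@big_cat_nat _ _ _ K 0 (K + K - a)) //=; last first.
  by rewrite leq_subRL ?leq_add2r // ltnW // (leq_trans aK) // leq_addr.
rewrite [X in _ = _ + X]big1_seq ?addr0 // => c /andP[_].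
by rewrite mem_index_iota => /andP[Kc _]; apply: f0; rewrite Kc orbT.
Qed.

Section GaugeAction.
Variables (T : lmodType rat) (br : T -> T -> T) (d : T -> T) (D : int -> T -> Prop).
Hypotheses (br_bilinear : is_bilinear br) (d_linear : is_linear d)
  (D0 : forall n, D n 0) (D_lin : forall n r x y, D n x -> D n y -> D n (r *: x + y))
  (D_br : forall i j x y, D i x -> D j y -> D (i + j) (br x y))
  (D_d : forall i x, D i x -> D (i + 1) (d x))
  (br_anti : forall i j x y, D i x -> D j y -> br x y = - (sgn (i * j) *: br y x))
  (br_jacobi : forall i j k x y w, D i x -> D j y -> D k w ->
     br x (br y w) = br (br x y) w + sgn (i * j) *: br y (br x w))
  (d_leibniz : forall i j x y, D i x -> D j y -> d (br x y) = br (d x) y + sgn i *: br x (d y))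
  (d_d : forall i x, D i x -> d (d x) = 0).

Let brZl r x w : br (r *: x) w = r *: br x w. Proof. exact: (linZ (br_bilinear.2 w)). Qed.
Let br0l w : br 0 w = 0. Proof. exact: (lin0 (br_bilinear.2 w)). Qed.
Let brDr x y w : br w (x + y) = br w x + br w y. Proof. exact: (linD (br_bilinear.1 w)). Qed.
Let brZr r x w : br w (r *: x) = r *: br w x. Proof. exact: (linZ (br_bilinear.1 w)). Qed.
Let brNr x w : br w (- x) = - br w x. Proof. exact: (linN (br_bilinear.1 w)). Qed.
Let br0r w : br w 0 = 0. Proof. exact: (lin0 (br_bilinear.1 w)). Qed.

Lemma D_add n x y : D n x -> D n y -> D n (x + y).
Proof. by move=> hx hy; rewrite -[x]scale1r; apply: D_lin. Qed.

Lemma D_scale n r x : D n x -> D n (r *: x).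
Proof. by move=> hx; rewrite -[r *: x]addr0; apply: D_lin. Qed.

Lemma D_sum n (I : Type) (r : seq I) (P : pred I) (F : I -> T) :
  (forall i, P i -> D n (F i)) -> D n (\sum_(i <- r | P i) F i).
Proof.
move=> H; elim: r => [|i r IH]; first by rewrite big_nil.
by rewrite big_cons; case: ifP => // Pi; apply: D_add => //; apply: H.
Qed.

Variables (X alpha : T) (M : nat).
Hypotheses (hX : D 0 X) (halpha : D 1 alpha)
  (hM : iter M (br X) (d X + br alpha X) = 0).

Local Notation Y k := (iter k (br X) (d X + br alpha X)).

Lemma D_ad_iter k : D 1 (Y k).
Proof.
elim: k => [|k IH] /=; last by have := D_br hX IH; rewrite add0r.
by apply: D_add; [have := D_d hX; rewrite add0r | have := D_br halpha hX; rewrite addr0].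
Qed.

Lemma ad_iter_ge k : (M <= k)%N -> Y k = 0.
Proof.
move=> Mk; rewrite -(subnK Mk) iterD hM.
by elim: (k - M)%N => [|n IH] //=; rewrite IH br0r.
Qed.

Lemma br_X_anti u : D 1 u -> br u X = - br X u.
Proof. by move=> hu; rewrite (br_anti hu hX) mulr0 sgn0 scale1r. Qed.

Lemma br_odd_comm u v : D 1 u -> D 1 v -> br u v = br v u.
Proof. by move=> hu hv; rewrite (br_anti hu hv) mulr1 sgn1 scaleN1r opprK. Qed.

Definition gauge_term k : T :=
  if k is k'.+1 then - ((k'.+1)`!%:R^-1 : rat) *: Y k' else alpha.

Local Notation b := gauge_term.

Lemma D_gauge_term k : D 1 (b k).
Proof. by case: k => [|k] //=; apply: D_scale; apply: D_ad_iter. Qed.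

Lemma gauge_term_ge k : (M < k)%N -> b k = 0.
Proof. by case: k => [|k] //= Mk; rewrite ad_iter_ge // scaler0. Qed.

Lemma gauge_expand : gauge br d M X alpha = \sum_(0 <= k < M.+1) b k.
Proof.
rewrite big_nat_recl //= /gauge big_mkord -sumrN.
by congr (_ + _); apply: eq_bigr => i _; rewrite scaleNr.
Qed.

Lemma D_gauge : D 1 (gauge br d M X alpha).
Proof. by rewrite gauge_expand; apply: D_sum => k _; apply: D_gauge_term. Qed.

Let dX0 k : T := if k is 0 then d X else 0.

Lemma gauge_term_rec k : k.+1%:R *: b k.+1 = - (dX0 k + br (b k) X).
Proof.
case: k => [|k]; first by rewrite /= invr1 !scale1r scaleN1r.
rewrite /= add0r brZl (br_X_anti (D_ad_iter k)) scalerN opprK scalerA; congr (_ *: _).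
by rewrite mulrN [(k.+2)`!]factS natrM invfM mulrA divff ?mul1r // pnatr_eq0.
Qed.

Lemma d_gauge_term_rec k : d (dX0 k + br (b k) X) = br (d (b k)) X - br (b k) (d X).
Proof.
rewrite (linD d_linear) (d_leibniz (D_gauge_term k) hX) sgn1 scaleN1r.
by case: k => [|k] /=; rewrite ?(d_d hX) ?(lin0 d_linear) add0r.
Qed.

Definition MC_component k : T :=
  d (b k) + 2%:R^-1 *: \sum_(0 <= a < k.+1) br (b a) (b (k - a)).

Lemma MC_component0 : MC_component 0 = MC_F br d alpha.
Proof. by rewrite /MC_component big_nat1. Qed.

Lemma antidiag_br_weighted k :
  k.+1%:R *: \sum_(0 <= a < k.+2) br (b a) (b (k.+1 - a)) =
  2%:R *: \sum_(0 <= a < k.+1) br (b a) ((k - a).+1%:R *: b (k - a).+1).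
Proof.
have split_weight a : (0 <= a < k.+2)%N -> k.+1%:R *: br (b a) (b (k.+1 - a)) =
    a%:R *: br (b a) (b (k.+1 - a)) + (k.+1 - a)%:R *: br (b a) (b (k.+1 - a)).
  by move=> /andP[_ ha]; rewrite -scalerDl -natrD subnKC.
rewrite scaler_sumr (eq_big_nat _ _ split_weight) big_split /=.
have -> : \sum_(0 <= a < k.+2) a%:R *: br (b a) (b (k.+1 - a)) =
    \sum_(0 <= a < k.+2) (k.+1 - a)%:R *: br (b a) (b (k.+1 - a)).
  rewrite big_nat_rev; apply: eq_big_nat => a /andP[_ ha].
  by rewrite add0n subSS subKn // br_odd_comm //; apply: D_gauge_term.
rewrite -mulr2n -scaler_nat big_nat_recr //= subnn scale0r addr0.
by congr (_ *: _); apply: eq_big_nat => a /andP[_ ha]; rewrite brZr subSn.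
Qed.

Lemma antidiag_br_rec k :
  \sum_(0 <= a < k.+1) br (b a) ((k - a).+1%:R *: b (k - a).+1) =
  - br (b k) (d X) - \sum_(0 <= a < k.+1) br (b a) (br (b (k - a)) X).
Proof.
rewrite (eq_big_nat _ _ (fun a _ => congr1 (br (b a)) (gauge_term_rec (k - a)))).
under eq_big_nat => a _ do rewrite brNr brDr.
rewrite sumrN big_split /= opprD.
congr (_ - _); rewrite big_nat_recr //= subnn big1_seq ?add0r // => a.
by rewrite mem_index_iota => /andP[_ /andP[_ ak]]; rewrite -(subnSK ak) br0r.
Qed.

Lemma br_X_antidiag k :
  \sum_(0 <= a < k.+1) br X (br (b a) (b (k - a))) =
  - (2%:R *: \sum_(0 <= a < k.+1) br (b a) (br (b (k - a)) X)).
Proof.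
have jacobi a : br X (br (b a) (b (k - a))) =
    - br (b (k - a)) (br (b a) X) - br (b a) (br (b (k - a)) X).
  have Da := D_gauge_term a; have Dk := D_gauge_term (k - a).
  have DXa : D 1 (br X (b a)) by have := D_br hX Da; rewrite add0r.
  rewrite (br_jacobi hX Da Dk) mul0r sgn0 scale1r (br_odd_comm DXa Dk).
  by rewrite -[br X (b a)]opprK -[br X (b (k - a))]opprK -!br_X_anti // !brNr.
under eq_bigr do rewrite jacobi.
rewrite big_split /= sumrN (big_antidiag_rev k (fun a c => br (b c) (br (b a) X))) /=.
by rewrite sumrN scaler_nat mulr2n opprD.
Qed.

Lemma MC_component_rec k : k.+1%:R *: MC_component k.+1 = br X (MC_component k).
Proof.
rewrite /MC_component scalerDr -(linZ d_linear) gauge_term_rec (linN d_linear).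
rewrite d_gauge_term_rec scalerA mulrC -scalerA antidiag_br_weighted scalerA.
rewrite mulVf ?pnatr_eq0 // scale1r antidiag_br_rec.
rewrite brDr brZr (lin_sum (br_bilinear.1 X)) br_X_antidiag scalerN scalerA.
rewrite mulVf ?pnatr_eq0 // scale1r.
have -> : br X (d (b k)) = - br (d (b k)) X.
  by rewrite (br_anti hX (D_d (D_gauge_term k))) mul0r sgn0 scale1r.
by rewrite opprB addrA (addrC (br (b k) (d X))) addrK.
Qed.

Lemma MC_component_eq0 k : br X (MC_F br d alpha) = 0 -> MC_component k.+1 = 0.
Proof.
move=> XF0; elim: k => [|k IH].
  by have := MC_component_rec 0; rewrite MC_component0 XF0 mulr1n scale1r.
apply: (@scalerI _ _ k.+2%:R); first by rewrite pnatr_eq0.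
by rewrite MC_component_rec IH br0r scaler0.
Qed.

Lemma MC_F_gauge : br X (MC_F br d alpha) = 0 ->
  MC_F br d (gauge br d M X alpha) = MC_F br d alpha.
Proof.
move=> XF0; rewrite gauge_expand /MC_F.
have -> : br (\sum_(0 <= k < M.+1) b k) (\sum_(0 <= k < M.+1) b k) =
    \sum_(0 <= a < M.+1) \sum_(0 <= c < M.+1) br (b a) (b c).
  rewrite (lin_sum (br_bilinear.2 _)); apply: eq_bigr => a _.
  by rewrite (lin_sum (br_bilinear.1 _) _ xpredT).
rewrite (@big_square_antidiag _ (fun a c => br (b a) (b c)) M.+1); last first.
  by move=> a c /orP[] /gauge_term_ge ->; rewrite ?br0l ?br0r.
have -> : d (\sum_(0 <= k < M.+1) b k) = \sum_(0 <= k < M.+1 + M.+1) d (b k).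
  rewrite (lin_sum d_linear) (big_cat_nat _ (leq_addr M.+1 M.+1)) //=.
  rewrite [X in _ = _ + X]big1_seq ?addr0 // => a /andP[_].
  by rewrite mem_index_iota => /andP[ha _]; rewrite gauge_term_ge // (lin0 d_linear).
rewrite scaler_sumr -big_split (eq_bigr MC_component) //= big_nat_recl //.
by rewrite MC_component0 big1 ?addr0 // => i _; apply: MC_component_eq0.
Qed.

End GaugeAction.

Section TensorDGLA.
Variables (A : lmodType rat) (degA : int -> A -> Prop) (mulA : A -> A -> A) (oneA : A)
  (dA : A -> A) (L : lmodType rat) (degL : int -> L -> Prop) (brL : L -> L -> L)
  (dL : L -> L) (T : lmodType rat) (t : A -> L -> T) (brT : T -> T -> T) (dT : T -> T).
Hypotheses (hA : is_cdga degA mulA oneA dA) (hL : is_dgla degL brL dL)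
  (t_bilinear : is_bilinear t) (hTd : is_tensor_dgla degA mulA dA degL brL dL t brT dT).

Lemma degA_mulA i j a b : degA i a -> degA j b -> degA (i + j) (mulA a b).
Proof. by case: hA => _ [H _ _]; apply: H. Qed.
Lemma mulA_gcomm i j a b : degA i a -> degA j b -> mulA a b = sgn (i * j) *: mulA b a.
Proof. by case: hA => _ [_ H _]; apply: H. Qed.
Lemma mulA_assoc a b c : mulA a (mulA b c) = mulA (mulA a b) c.
Proof. by case: hA => [[_ _ _ H _] _]; apply: H. Qed.
Lemma mulAZl r a b : mulA (r *: a) b = r *: mulA a b.
Proof. by case: hA => [[_ _ [_ H] _ _] _]; apply: (linZ (H b)). Qed.
Lemma degA_dA i a : degA i a -> degA (i + 1) (dA a).
Proof. by case: hA => _ [_ _ [_ H _ _]]; apply: H. Qed.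
Lemma dA_dA a : dA (dA a) = 0.
Proof. by case: hA => _ [_ _ [_ _ H _]]; apply: H. Qed.
Lemma dA_leibniz i a b : degA i a ->
  dA (mulA a b) = mulA (dA a) b + sgn i *: mulA a (dA b).
Proof. by case: hA => _ [_ _ [_ _ _ H]]; apply: H. Qed.

Lemma degL_brL i j x y : degL i x -> degL j y -> degL (i + j) (brL x y).
Proof. by case: hL => [[_ _ H _ _] _]; apply: H. Qed.
Lemma brL_anti i j x y : degL i x -> degL j y -> brL x y = - (sgn (i * j) *: brL y x).
Proof. by case: hL => [[_ _ _ H _] _]; apply: H. Qed.
Lemma brL_jacobi i j x y z : degL i x -> degL j y ->
  brL x (brL y z) = brL (brL x y) z + sgn (i * j) *: brL y (brL x z).
Proof. by case: hL => [[_ _ _ _ H] _]; apply: H. Qed.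
Lemma degL_dL i x : degL i x -> degL (i + 1) (dL x).
Proof. by case: hL => _ [_ H _ _]; apply: H. Qed.
Lemma dL_dL x : dL (dL x) = 0.
Proof. by case: hL => _ [_ _ H _]; apply: H. Qed.
Lemma dL_leibniz i x y : degL i x ->
  dL (brL x y) = brL (dL x) y + sgn i *: brL x (dL y).
Proof. by case: hL => _ [_ _ _ H]; apply: H. Qed.

Lemma brT_bilinear : is_bilinear brT. Proof. by case: hTd. Qed.
Lemma dT_linear : is_linear dT. Proof. by case: hTd. Qed.
Lemma brT_tensor i1 j1 i2 j2 b1 w1 b2 w2 : degA i1 b1 -> degL j1 w1 ->
  degA i2 b2 -> degL j2 w2 ->
  brT (t b1 w1) (t b2 w2) = sgn (j1 * i2) *: t (mulA b1 b2) (brL w1 w2).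
Proof. by case: hTd => _ _ H _; apply: H. Qed.
Lemma dT_tensor i j b w : degA i b -> degL j w ->
  dT (t b w) = t (dA b) w + sgn i *: t b (dL w).
Proof. by case: hTd => _ _ _ H; apply: H. Qed.

Let tZl r a w : t (r *: a) w = r *: t a w. Proof. exact: (linZ (t_bilinear.2 w)). Qed.
Let tZr r a w : t a (r *: w) = r *: t a w. Proof. exact: (linZ (t_bilinear.1 a)). Qed.
Let tDl a b w : t (a + b) w = t a w + t b w. Proof. exact: (linD (t_bilinear.2 w)). Qed.
Let tDr a w v : t a (w + v) = t a w + t a v. Proof. exact: (linD (t_bilinear.1 a)). Qed.
Let tNr a w : t a (- w) = - t a w. Proof. exact: (linN (t_bilinear.1 a)). Qed.
Let t0l w : t 0 w = 0. Proof. exact: (lin0 (t_bilinear.2 w)). Qed.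
Let t0r a : t a 0 = 0. Proof. exact: (lin0 (t_bilinear.1 a)). Qed.

Local Notation G := (tdeg_pos degA degL t).

Lemma tdeg_pos0 n : G n 0. Proof. exact: span0. Qed.

Lemma tdeg_posZD n r x y : G n x -> G n y -> G n (r *: x + y).
Proof. exact: spanZD. Qed.

Lemma tdeg_pos_br i j x y : G i x -> G j y -> G (i + j) (brT x y).
Proof.
apply: span_bilinear_image; first exact: brT_bilinear.
move=> u v [i1 [j1 [a [w [pi1 Hi ha hw ->]]]]] [i2 [j2 [b [v' [pi2 Hj hb hv ->]]]]].
rewrite (brT_tensor ha hw hb hv); apply: spanZ; apply: span_gen.
exists (i1 + i2), (j1 + j2), (mulA a b), (brL w v'); split.
- exact: addr_gt0.
- by rewrite -Hi -Hj; ring.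
- exact: degA_mulA.
- exact: degL_brL.
- by [].
Qed.

Lemma tdeg_pos_d i x : G i x -> G (i + 1) (dT x).
Proof.
apply: span_linear_image; first exact: dT_linear.
move=> u [i1 [j1 [a [w [pi1 Hi ha hw ->]]]]].
rewrite (dT_tensor ha hw); apply: spanD; last apply: spanZ; apply: span_gen.
- exists (i1 + 1), j1, (dA a), w; split => //; last exact: degA_dA.
  + exact: addr_gt0.
  + by rewrite -Hi; ring.
- exists i1, (j1 + 1), a, (dL w); split => //; last exact: degL_dL.
  by rewrite -Hi; ring.
Qed.

Lemma brT_anti i j x y : G i x -> G j y -> brT x y = - (sgn (i * j) *: brT y x).
Proof.
apply: (@span_bilinear_eq _ _ _ brT (fun x y => - (sgn (i * j) *: brT y x))).
- exact: brT_bilinear.2.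
- exact: brT_bilinear.1.
- by move=> y'; apply/is_linear_opp/is_linear_scale/(brT_bilinear.1 y').
- by move=> x'; apply/is_linear_opp/is_linear_scale/(brT_bilinear.2 x').
move=> u v [i1 [j1 [a [w [_ <- ha hw ->]]]]] [i2 [j2 [b [v' [_ <- hb hv ->]]]]].
rewrite (brT_tensor ha hw hb hv) (brT_tensor hb hv ha hw) (mulA_gcomm ha hb).
rewrite (brL_anti hw hv) tZl tNr tZr !scalerN !scalerA; congr (- (_ *: _)).
by rewrite -!sgnD; apply: (@sgn_parity _ _ (- (i1 * j2))); ring.
Qed.

Lemma brT_jacobi i j k x y z : G i x -> G j y -> G k z ->
  brT x (brT y z) = brT (brT x y) z + sgn (i * j) *: brT y (brT x z).
Proof.
have [bl1 bl2] := brT_bilinear.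
apply: (@span_trilinear_eq _ _ _ _ (fun x y z => brT x (brT y z))
   (fun x y z => brT (brT x y) z + sgn (i * j) *: brT y (brT x z))).
- by move=> y' z'; exact: bl2.
- by move=> x' z'; exact: is_linear_comp (bl2 z') (bl1 x').
- by move=> x' y'; exact: is_linear_comp (bl1 y') (bl1 x').
- move=> y' z'; apply: is_linear_add (is_linear_comp (bl2 y') (bl2 z')) _.
  exact/is_linear_scale/(is_linear_comp (bl2 z') (bl1 y')).
- move=> x' z'; apply: is_linear_add (is_linear_comp (bl1 x') (bl2 z')) _.
  exact/is_linear_scale/bl2.
- move=> x' y'; apply: is_linear_add (bl1 _) _.
  exact/is_linear_scale/(is_linear_comp (bl1 x') (bl1 y')).
move=> u v u2 [i1 [j1 [a [w [_ <- ha hw ->]]]]] [i2 [j2 [b [v' [_ <- hb hv ->]]]]].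
move=> [i3 [j3 [c [u' [_ _ hc hu ->]]]]].
rewrite (brT_tensor hb hv hc hu) (linZ (bl1 _)).
rewrite (brT_tensor ha hw (degA_mulA hb hc) (degL_brL hv hu)).
rewrite (brT_tensor ha hw hb hv) (linZ (bl2 _)).
rewrite (brT_tensor (degA_mulA ha hb) (degL_brL hw hv) hc hu).
rewrite (brT_tensor ha hw hc hu) (linZ (bl1 _)).
rewrite (brT_tensor hb hv (degA_mulA ha hc) (degL_brL hw hu)).
rewrite (mulA_assoc a b c) (mulA_assoc b a c) (mulA_gcomm hb ha) mulAZl.
rewrite (brL_jacobi _ hw hv) tDr !tZr tZl !scalerDr !scalerA.
congr (_ *: _ + _ *: _); rewrite -!sgnD.
  by apply: (@sgn_parity _ _ 0); ring.
by apply: (@sgn_parity _ _ (- (i1 * i2 + i1 * j2))); ring.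
Qed.

Lemma dT_leibniz i j x y : G i x -> G j y ->
  dT (brT x y) = brT (dT x) y + sgn i *: brT x (dT y).
Proof.
have [bl1 bl2] := brT_bilinear.
apply: (@span_bilinear_eq _ _ _ (fun x y => dT (brT x y))
   (fun x y => brT (dT x) y + sgn i *: brT x (dT y))).
- by move=> y'; exact: is_linear_comp (bl2 y') dT_linear.
- by move=> x'; exact: is_linear_comp (bl1 x') dT_linear.
- move=> y'; apply: is_linear_add (is_linear_comp dT_linear (bl2 y')) _.
  exact/is_linear_scale/bl2.
- move=> x'; apply: is_linear_add (bl1 _) _.
  exact/is_linear_scale/(is_linear_comp dT_linear (bl1 x')).
move=> u v [i1 [j1 [a [w [_ <- ha hw ->]]]]] [i2 [j2 [b [v' [_ _ hb hv ->]]]]].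
rewrite (brT_tensor ha hw hb hv) (linZ dT_linear).
rewrite (dT_tensor (degA_mulA ha hb) (degL_brL hw hv)) (dA_leibniz _ ha) (dL_leibniz _ hw).
rewrite (dT_tensor ha hw) (dT_tensor hb hv) (linD (bl2 _)) (linZ (bl2 _)).
rewrite (linD (bl1 _)) (linZ (bl1 _)).
rewrite (brT_tensor (degA_dA ha) hw hb hv) (brT_tensor ha (degL_dL hw) hb hv).
rewrite (brT_tensor ha hw (degA_dA hb) hv) (brT_tensor ha hw hb (degL_dL hv)).
rewrite tDl tDr !tZl !tZr !scalerDr !scalerA !addrA [X in _ = X + _]addrAC.
congr (_ *: _ + _ *: _ + _ *: _ + _ *: _); rewrite -!sgnD.
- by apply: (@sgn_parity _ _ (- j1)); ring.
- by apply: (@sgn_parity _ _ 0); ring.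
- by apply: (@sgn_parity _ _ 0); ring.
Qed.

Lemma dT_dT i x : G i x -> dT (dT x) = 0.
Proof.
apply: (@span_linear_eq _ _ (fun x => dT (dT x)) (fun _ => 0)).
- exact: is_linear_comp dT_linear dT_linear.
- exact: is_linear0.
move=> u [i1 [j1 [a [w [_ _ ha hw ->]]]]].
rewrite (dT_tensor ha hw) (linD dT_linear) (linZ dT_linear).
rewrite (dT_tensor (degA_dA ha) hw) (dT_tensor ha (degL_dL hw)) dA_dA dL_dL t0l t0r.
by rewrite add0r scaler0 addr0 sgnS scaleNr addNr.
Qed.

Lemma tensor_MC_F_gauge X al M : G 0 X -> G 1 al ->
  iter M (brT X) (dT X + brT al X) = 0 -> brT X (MC_F brT dT al) = 0 ->
  MC_F brT dT (gauge brT dT M X al) = MC_F brT dT al.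
Proof.
exact: (MC_F_gauge brT_bilinear dT_linear tdeg_pos0 tdeg_posZD tdeg_pos_br
  tdeg_pos_d brT_anti brT_jacobi dT_leibniz dT_dT).
Qed.

Lemma tdeg_pos_ad_iter X al k : G 0 X -> G 1 al ->
  G 1 (iter k (brT X) (dT X + brT al X)).
Proof. by move=> hX hal; apply: (D_ad_iter tdeg_posZD tdeg_pos_br tdeg_pos_d hX hal). Qed.

Lemma tensor_gauge_homog X al M : G 0 X -> G 1 al -> G 1 (gauge brT dT M X al).
Proof. exact: (D_gauge tdeg_pos0 tdeg_posZD tdeg_pos_br tdeg_pos_d). Qed.

Lemma gauge_defining_system X al M : G 0 X -> defining_system degA degL t brT dT al ->
  iter M (brT X) (dT X + brT al X) = 0 ->
  defining_system degA degL t brT dT (gauge brT dT M X al).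
Proof.
move=> hX [hal MCal] hM; split; first exact: tensor_gauge_homog.
rewrite tensor_MC_F_gauge // MCal; exact: lin0 (brT_bilinear.1 X).
Qed.

Definition tdeg_pos_lcs (k : nat) (m : int) (v : T) : Prop := exists i j a w,
  [/\ 0 < i, i + j = m, degA i a, degL j w & lcs brL k w /\ v = t a w].

Lemma tdeg_pos_lcs_br k m X v : G 0 X ->
  span (tdeg_pos_lcs k m) v -> span (tdeg_pos_lcs k.+1 m) (brT X v).
Proof.
move=> hX; apply: span_linear_image; first exact: (brT_bilinear.1 X).
move=> u [i2 [j2 [b [w [pi2 Hj hb hw [hl ->]]]]]].
apply: (@span_linear_image _ _ (brT^~ (t b w)) _ _ X (brT_bilinear.2 _)) hX.
move=> u' [i1 [j1 [a [w0 [pi1 Hi ha hw0 ->]]]]].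
rewrite (brT_tensor ha hw0 hb hw); apply: spanZ; apply: span_gen.
exists (i1 + i2), (j1 + j2), (mulA a b), (brL w0 w); split.
- exact: addr_gt0.
- by lia.
- exact: degA_mulA.
- exact: degL_brL.
- by split => //; apply: span_gen; exists w0, w.
Qed.

Lemma ad_nilpotent K X v m : (forall u, lcs brL K u -> u = 0) -> G 0 X -> G m v ->
  iter K (brT X) v = 0.
Proof.
move=> hK hX hv.
have : span (tdeg_pos_lcs K m) (iter K (brT X) v).
  elim: K {hK} => [|K IH] /=; last exact: tdeg_pos_lcs_br.
  by apply: span_mono hv => u [i [j [a [w [? ? ? ? ->]]]]]; exists i, j, a, w.
elim/span_ind => [//|r u y' [i [j [a [w [_ _ _ _ [hl ->]]]]]] ->].
by rewrite (hK _ hl) t0r scaler0 add0r.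
Qed.

Lemma ad_iter_nilpotent K M X al : (forall u, lcs brL K u -> u = 0) ->
  G 0 X -> G 1 al -> iter (K + M) (brT X) (dT X + brT al X) = 0.
Proof. by move=> hK hX hal; rewrite iterD (ad_nilpotent hK hX (tdeg_pos_ad_iter M hX hal)). Qed.

End TensorDGLA.

Section Graded.
Variables (V : lmodType rat) (deg : int -> V -> Prop).
Hypothesis V_graded : is_graded deg.

Lemma deg0 i : deg i 0. Proof. by case: V_graded. Qed.

Lemma degZD i r u v : deg i u -> deg i v -> deg i (r *: u + v).
Proof. by case: V_graded => _ H _ _; apply: H. Qed.

Lemma degZ i r u : deg i u -> deg i (r *: u).
Proof. by move=> hu; rewrite -[_ *: u]addr0; apply: degZD (deg0 i). Qed.

Lemma degD i u v : deg i u -> deg i v -> deg i (u + v).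
Proof. by move=> hu hv; rewrite -[u]scale1r; apply: degZD. Qed.

Lemma deg_sum i (I : Type) (r : seq I) (P : pred I) (F : I -> V) :
  (forall k, P k -> deg i (F k)) -> deg i (\sum_(k <- r | P k) F k).
Proof.
move=> H; elim: r => [|k r IH]; first by rewrite big_nil; apply: deg0.
by rewrite big_cons; case: ifP => // Pk; apply: degD => //; apply: H.
Qed.

Lemma graded_span_homog v : span (fun u => exists i, deg i u) v.
Proof.
case: V_graded => _ _ /(_ v) [s [hs ->]] _.
rewrite big_seq_cond; apply: span_sum => p /andP[ps _]; apply: span_gen.
by exists p.1; apply: hs.
Qed.

Lemma graded_sum_component_eq0 (s : seq (int * V)) :
  (forall p, p \in s -> deg p.1 p.2) -> \sum_(p <- s) p.2 = 0 ->
  forall i, \sum_(p <- s | p.1 == i) p.2 = 0.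
Proof.
move=> hs s0 i.
pose I := undup (map fst s).
pose s' := [seq (j, \sum_(p <- s | p.1 == j) p.2) | j <- I].
have us' : uniq (map fst s') by rewrite -map_comp map_id_in ?undup_uniq.
have ds' p : p \in s' -> deg p.1 p.2.
  move=> /mapP[j _ ->] /=; rewrite big_seq_cond.
  by apply: deg_sum => p' /andP[ps /eqP <-]; apply: hs.
have sum' : \sum_(p <- s') p.2 = 0.
  rewrite big_map /= -[RHS]s0; under eq_bigr do rewrite big_mkcond.
  rewrite exchange_big /=; apply: eq_big_seq => p ps.
  rewrite (bigD1_seq p.1) ?undup_uniq //=; last by rewrite mem_undup map_f.
  by rewrite eqxx big1 ?addr0 // => j; rewrite eq_sym => /negbTE ->.
case: (boolP (i \in I)) => iI.
  case: V_graded => _ _ _ /(_ s' us' ds' sum' (i, _)); apply.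
  by apply/mapP; exists i.
rewrite big1_seq // => p /andP[/eqP pi ps].
by move: iI; rewrite mem_undup -pi map_f.
Qed.

Lemma homog_component i v (s : seq (int * V)) : deg i v ->
  (forall p, p \in s -> deg p.1 p.2) -> v = \sum_(p <- s) p.2 ->
  v = \sum_(p <- s | p.1 == i) p.2.
Proof.
move=> hv hs vs.
have hs' p : p \in (i, - v) :: s -> deg p.1 p.2.
  by rewrite in_cons => /orP[/eqP -> /=|]; [rewrite -scaleN1r; apply: degZ | apply: hs].
have := graded_sum_component_eq0 hs' _ i.
rewrite !big_cons /= eqxx -vs addNr => /(_ erefl) /eqP.
by rewrite addrC subr_eq0 => /eqP.
Qed.

Lemma homog_span_other_eq0 q x :
  span (fun v => exists i, i != q /\ deg i v) x -> deg q x -> x = 0.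
Proof.
move=> sx hx.
have [s [hs xs]] : exists s : seq (int * V),
    (forall p, p \in s -> deg p.1 p.2 /\ p.1 != q) /\ x = \sum_(p <- s) p.2.
  elim/span_ind: sx {hx} => [|r v y [i [iq hv]] [s [hs ->]]].
    by exists [::]; rewrite big_nil.
  exists ((i, r *: v) :: s); split; last by rewrite big_cons.
  move=> p; rewrite in_cons => /orP[/eqP -> /=|]; last by apply: hs.
  by split => //; apply: degZ.
rewrite (homog_component hx _ xs); last by move=> p /hs[].
rewrite big1_seq // => p /andP[/eqP pq ps].
by have [_] := hs p ps; rewrite pq eqxx.
Qed.

End Graded.

Lemma graded_lift_homog (V W : lmodType rat) (degV : int -> V -> Prop)
    (degW : int -> W -> Prop) (f : V -> W) :
  is_graded degV -> is_graded degW -> is_linear f ->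
  (forall i v, degV i v -> degW i (f v)) -> (forall w, exists v, f v = w) ->
  forall j w, degW j w -> exists2 v, degV j v & f v = w.
Proof.
move=> hV hW hf fdeg fsurj j w hw; have [u0 hu0] := fsurj w.
have [s [hs us]] : exists s : seq (int * V), (forall p, p \in s -> degV p.1 p.2) /\
   u0 = \sum_(p <- s) p.2 by case: hV => _ _ H _; apply: H.
exists (\sum_(p <- s | p.1 == j) p.2).
  by rewrite big_seq_cond; apply: deg_sum => // p /andP[ps /eqP <-]; apply: hs.
pose sW := [seq (p.1, f p.2) | p <- s].
have hsW p : p \in sW -> degW p.1 p.2.
  by move=> /mapP[p' p's ->] /=; apply: fdeg; apply: hs.
have wsW : w = \sum_(p <- sW) p.2 by rewrite big_map -hu0 us (lin_sum hf).
by rewrite (homog_component hW hw hsW wsW) big_map (lin_sum hf).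
Qed.

Section SeparatingFunctional.
Variables (V : lmodType rat) (H : V -> Prop) (z : V).
Hypothesis z_notin_span : ~ span H z.

Let spanH (S : V -> Prop) := span (fun v => H v \/ S v).

Lemma exists_maximal_avoiding :
  exists S, ~ spanH S z /\ forall S', classical_sets.proper S S' -> spanH S' z.
Proof.
have [S [zS maxS]] : exists S, ~ spanH S z /\
    forall S', classical_sets.proper S S' -> ~ ~ spanH S' z.
  apply: classical_sets.Zorn_bigcup => F FP Ftot.
  suff chain_span x : spanH (classical_sets.bigcup F id) x ->
      span H x \/ exists2 S, F S & spanH S x.
    by move=> /chain_span [//|[S FS]]; apply: FP.
  elim/span_ind => [|r v y hv IH]; first by left; apply: span0.
  have Hspan S' : span H y -> spanH S' y by apply: span_mono => u hu; left.
  case: hv IH => [Hv|[S' FS' S'v]] [sy|[S FS sy]].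
  + by left; apply: span_cons.
  + by right; exists S => //; apply: span_cons => //; left.
  + by right; exists S' => //; apply: span_cons (Hspan _ sy); right.
  + have [SS'|S'S] := Ftot S S' FS FS'.
      right; exists S' => //; apply: span_cons; first by right.
      by apply: span_mono sy => u [hu|hu]; [left|right; apply: SS'].
    by right; exists S => //; apply: span_cons => //; right; apply: S'S.
by exists S; split => // S' /maxS /boolp.contrapT.
Qed.

Section MaximalAvoiding.
Variable S : V -> Prop.
Hypotheses (zS : ~ spanH S z)
  (maxS : forall S', classical_sets.proper S S' -> spanH S' z).

(* maximality makes span (H \/ S) a hyperplane complementary to z *)
Lemma maximal_avoiding_coord v : exists c : rat, spanH S (v - c *: z).
Proof.
case: (boolp.pselect (S v)) => Sv.
  by exists 0; rewrite scale0r subr0; apply: span_gen; right.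
have [w [r [sw zE]]] : exists w r, spanH S w /\ z = w + r *: v.
  have : spanH (fun x => S x \/ x = v) z.
    by apply: maxS; split => [x Sx|vS]; [left | apply/Sv/vS; right].
  elim/span_ind => [|r v' y hv' [w [c [sw ->]]]].
    by exists 0, 0; rewrite scale0r addr0; split => //; apply: span0.
  case: hv' => [Hv'|[Sv'|->]].
  - by exists (r *: v' + w), c; rewrite addrA; split => //; apply: span_cons => //; left.
  - by exists (r *: v' + w), c; rewrite addrA; split => //; apply: span_cons => //; right.
  - by exists w, (r + c); rewrite scalerDl addrCA.
have r0 : r != 0 by apply: contra_notN zS => /eqP r0; rewrite zE r0 scale0r addr0.
exists r^-1; rewrite zE scalerDr scalerA mulVf // scale1r opprD addrA addrAC subrr add0r.
exact/spanN/spanZ.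
Qed.

Lemma maximal_avoiding_coord_uniq v c1 c2 :
  spanH S (v - c1 *: z) -> spanH S (v - c2 *: z) -> c1 = c2.
Proof.
move=> s1 s2; apply/eqP; rewrite -subr_eq0; apply/negPn/negP => c12; apply: zS.
have -> : z = (c1 - c2)^-1 *: ((v - c2 *: z) - (v - c1 *: z)).
  rewrite opprD opprK addrACA subrr add0r addrC -scalerBl scalerA.
  by rewrite mulVf ?scale1r.
exact/spanZ/spanB.
Qed.

End MaximalAvoiding.

Lemma separating_functional :
  exists phi : V -> rat^o, [/\ is_linear phi, phi z = 1 & forall h, H h -> phi h = 0].
Proof.
have [S [zS maxS]] := exists_maximal_avoiding.
have coord_uniq := maximal_avoiding_coord_uniq zS.
pose phi v := proj1_sig (boolp.cid (maximal_avoiding_coord zS maxS v)).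
have phiP v : spanH S (v - phi v *: z).
  by rewrite /phi; case: boolp.cid.
exists phi; split.
- move=> r u v; apply: (coord_uniq (r *: u + v)); first exact: phiP.
  rewrite scalerDl -scalerA opprD addrACA -scalerBr.
  exact/spanZD/phiP/phiP.
- by apply: (coord_uniq z _ _ (phiP z)); rewrite scale1r subrr; apply: span0.
- move=> h Hh; apply: (coord_uniq h _ _ (phiP h)).
  by rewrite scale0r subr0; apply: span_gen; left.
Qed.

End SeparatingFunctional.

Lemma gauge_trunc (T : lmodType rat) (br : T -> T -> T) (d : T -> T) (N M : nat) X al :
  is_bilinear br -> (N <= M)%N -> iter N (br X) (d X + br al X) = 0 ->
  gauge br d M X al = gauge br d N X al.
Proof.
move=> hbr NM hN; rewrite /gauge; congr (_ - _).
rewrite -!(big_mkord xpredT (fun i => ((i.+1)`!%:R^-1 : rat) *: iter i (br X) _)).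
rewrite (big_cat_nat _ NM) //= [X in _ + X]big1_seq ?addr0 // => i.
rewrite mem_index_iota => /andP[_ /andP[Ni _]].
rewrite -(subnK Ni) iterD hN; suff -> : iter (i - N) (br X) 0 = 0 by rewrite scaler0.
by elim: (i - N)%N => [|n IH] //=; rewrite IH (lin0 (hbr.1 X)).
Qed.

Section TensorMorphism.
Variables (A : lmodType rat) (degA : int -> A -> Prop) (mulA : A -> A -> A) (oneA : A)
  (dA : A -> A) (L : lmodType rat) (degL : int -> L -> Prop) (brL : L -> L -> L)
  (dL : L -> L) (Lt : lmodType rat) (degLt : int -> Lt -> Prop) (brLt : Lt -> Lt -> Lt)
  (dLt : Lt -> Lt) (pi : Lt -> L)
  (T : lmodType rat) (t : A -> L -> T) (brT : T -> T -> T) (dT : T -> T)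
  (Tt : lmodType rat) (tt : A -> Lt -> Tt) (brTt : Tt -> Tt -> Tt) (dTt : Tt -> Tt)
  (P : Tt -> T).
Hypotheses (hA : is_cdga degA mulA oneA dA) (hL : is_dgla degL brL dL)
  (hLt : is_dgla degLt brLt dLt)
  (hpi : is_dgla_morphism degLt brLt dLt degL brL dL pi)
  (hTd : is_tensor_dgla degA mulA dA degL brL dL t brT dT)
  (hTtd : is_tensor_dgla degA mulA dA degLt brLt dLt tt brTt dTt)
  (P_linear : is_linear P) (P_tensor : forall a u, P (tt a u) = t a (pi u)).

Local Notation G := (tdeg_pos degA degL t).
Local Notation Gt := (tdeg_pos degA degLt tt).

Lemma pi_deg i u : degLt i u -> degL i (pi u).
Proof. by case: hpi => _ H _ _; apply: H. Qed.

Lemma P_brT i j x y : Gt i x -> Gt j y -> P (brTt x y) = brT (P x) (P y).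
Proof.
have [btl btr] := brT_bilinear hTtd; have [bl br] := brT_bilinear hTd.
apply: (@span_bilinear_eq _ _ _ (fun x y => P (brTt x y)) (fun x y => brT (P x) (P y))).
- by move=> y'; exact: is_linear_comp (btr y') P_linear.
- by move=> x'; exact: is_linear_comp (btl x') P_linear.
- by move=> y'; exact: is_linear_comp P_linear (br (P y')).
- by move=> x'; exact: is_linear_comp P_linear (bl (P x')).
move=> u v [i1 [j1 [a [w [_ _ ha hw ->]]]]] [i2 [j2 [b [v' [_ _ hb hv ->]]]]].
rewrite (brT_tensor hTtd ha hw hb hv) (linZ P_linear) !P_tensor.
by case: hpi => _ _ -> _; rewrite (brT_tensor hTd ha (pi_deg hw) hb (pi_deg hv)).
Qed.

Lemma P_dT i x : Gt i x -> P (dTt x) = dT (P x).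
Proof.
apply: (@span_linear_eq _ _ (fun x => P (dTt x)) (fun x => dT (P x))).
- exact: is_linear_comp (dT_linear hTtd) P_linear.
- exact: is_linear_comp P_linear (dT_linear hTd).
move=> u [i1 [j1 [a [w [_ _ ha hw ->]]]]].
rewrite (dT_tensor hTtd ha hw) (linD P_linear) (linZ P_linear) !P_tensor.
by case: hpi => _ _ _ ->; rewrite (dT_tensor hTd ha (pi_deg hw)).
Qed.

Lemma P_gauge M X al : Gt 0 X -> Gt 1 al ->
  P (gauge brTt dTt M X al) = gauge brT dT M (P X) (P al).
Proof.
move=> hX hal; rewrite /gauge (linB P_linear) (lin_sum P_linear); congr (_ - _).
apply: eq_bigr => i _; rewrite (linZ P_linear); congr (_ *: _).
elim: (nat_of_ord i) => [|n IH] /=.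
  by rewrite (linD P_linear) (P_dT hX) (P_brT hal hX).
by rewrite (P_brT hX (tdeg_pos_ad_iter hA hLt hTtd n hX hal)) IH.
Qed.

Lemma tdeg_pos_lift n X : (forall w, exists u, pi u = w) -> G n X ->
  exists2 Xt, Gt n Xt & P Xt = X.
Proof.
move=> pi_surj; elim/span_ind => [|r v y [i [j [a [w [i_gt0 Hij ha hw ->]]]]] [yt hyt Pyt]].
  by exists 0; [apply: span0 | apply: (lin0 P_linear)].
have [[[grLt _ _ _ _] _] [[grL _ _ _ _] _]] := (hLt, hL).
have [pi_linear _ _ _] := hpi.
have [u hu pu] := graded_lift_homog grLt grL pi_linear pi_deg pi_surj hw.
exists (r *: tt a u + yt); first by apply: span_cons => //; exists i, j, a, u.
by rewrite P_linear P_tensor pu Pyt.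
Qed.

End TensorMorphism.

Section CentralExtension.
Variables (A : lmodType rat) (degA : int -> A -> Prop) (mulA : A -> A -> A) (oneA : A)
  (dA : A -> A) (Lt : lmodType rat) (degLt : int -> Lt -> Prop) (brLt : Lt -> Lt -> Lt)
  (dLt : Lt -> Lt) (Tt : lmodType rat) (tt : A -> Lt -> Tt) (brTt : Tt -> Tt -> Tt)
  (dTt : Tt -> Tt) (q : int) (z : Lt).
Hypotheses (hA : is_cdga degA mulA oneA dA) (hLt : is_dgla degLt brLt dLt)
  (hTt : is_tensor tt) (hTtd : is_tensor_dgla degA mulA dA degLt brLt dLt tt brTt dTt)
  (z_deg : degLt q z) (z_central : forall u, brLt z u = 0) (z_closed : dLt z = 0).

Local Notation Gt := (tdeg_pos degA degLt tt).

Let A_graded : is_graded degA. Proof. by case: hA => [[]]. Qed.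
Let tt_bilinear : is_bilinear tt. Proof. by case: hTt. Qed.

Lemma brTt_tz_l n b y : Gt n y -> brTt (tt b z) y = 0.
Proof.
move=> hy; have [bl br] := brT_bilinear hTtd.
apply: (@span_bilinear_eq _ _ _ (fun b y => brTt (tt b z) y) (fun _ _ => 0) _ _ b y
  _ _ _ _ _ (graded_span_homog A_graded b) hy).
- by move=> y'; exact: is_linear_comp (tt_bilinear.2 z) (br y').
- by move=> b'; exact: bl.
- by move=> _; exact: is_linear0.
- by move=> _; exact: is_linear0.
- move=> b' u [i hb] [i1 [j1 [a [w [_ _ ha hw ->]]]]].
  by rewrite (brT_tensor hTtd hb z_deg ha hw) z_central (lin0 (tt_bilinear.1 _)) scaler0.
Qed.

Lemma brTt_tz_r n b x : Gt n x -> brTt x (tt b z) = 0.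
Proof.
move=> hx; have [bl br] := brT_bilinear hTtd.
have hbz : span (fun v => exists b' i, degA i b' /\ v = tt b' z) (tt b z).
  apply: (span_linear_image (tt_bilinear.2 z) _ (graded_span_homog A_graded b)).
  by move=> b' [i hb]; apply: span_gen; exists b', i.
apply: (@span_bilinear_eq _ _ _ brTt (fun _ _ => 0) _ _ x (tt b z) _ _ _ _ _ hx hbz).
- by move=> y'; exact: br.
- by move=> x'; exact: bl.
- by move=> _; exact: is_linear0.
- by move=> _; exact: is_linear0.
- move=> u _ [i1 [j1 [a [w [_ _ ha hw ->]]]]] [b' [i [hb ->]]].
  rewrite (brT_tensor hTtd ha hw hb z_deg) (brL_anti hLt hw z_deg) z_central.
  by rewrite scaler0 oppr0 (lin0 (tt_bilinear.1 _)) scaler0.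
Qed.

Lemma dTt_tz b : dTt (tt b z) = tt (dA b) z.
Proof.
apply: (@span_linear_eq _ _ (fun b => dTt (tt b z)) (fun b => tt (dA b) z) _ b
  _ _ _ (graded_span_homog A_graded b)).
- exact: is_linear_comp (tt_bilinear.2 z) (dT_linear hTtd).
- by case: hA => _ [_ _ [dA_linear _ _ _]]; exact: is_linear_comp dA_linear (tt_bilinear.2 z).
- move=> b' [i hb]; rewrite (dT_tensor hTtd hb z_deg) z_closed.
  by rewrite (lin0 (tt_bilinear.1 _)) scaler0 addr0.
Qed.

Lemma MC_F_add_tz n m x b : Gt n x -> Gt m (tt b z) ->
  MC_F brTt dTt (x + tt b z) = MC_F brTt dTt x + tt (dA b) z.
Proof.
move=> hx hbz; have [bl br] := brT_bilinear hTtd.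
rewrite /MC_F (linD (dT_linear hTtd)) (linD (br _)) !(linD (bl _)) dTt_tz.
rewrite (brTt_tz_r _ hx) (brTt_tz_l _ hx) (brTt_tz_l _ hbz) !addr0.
by rewrite addrAC.
Qed.

Lemma MC_F_gauge_tz M X al c : Gt 0 X -> Gt 1 al ->
  iter M (brTt X) (dTt X + brTt al X) = 0 -> MC_F brTt dTt al = tt c z ->
  MC_F brTt dTt (gauge brTt dTt M X al) = tt c z.
Proof.
move=> hX hal hM MCal; rewrite (tensor_MC_F_gauge hA hLt tt_bilinear hTtd hX hal hM) //.
by rewrite MCal (brTt_tz_r _ hX).
Qed.

Variables (L : lmodType rat) (pi : Lt -> L) (T : lmodType rat) (t : A -> L -> T)
  (P : Tt -> T).
Hypotheses (Lt_graded : is_graded degLt) (z_neq0 : z != 0)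
  (pi_linear : is_linear pi) (pi_surj : forall w, exists u, pi u = w)
  (ker_pi : forall u, pi u = 0 <-> exists c : rat, u = c *: z)
  (hT : is_tensor t) (P_linear : is_linear P) (P_tensor : forall a u, P (tt a u) = t a (pi u)).

Lemma z_coord_functional : exists phi : Lt -> rat^o,
  [/\ is_linear phi, phi z = 1 & forall i u, i != q -> degLt i u -> phi u = 0].
Proof.
have [|phi [phi_linear phi_z phi_deg]] :=
  @separating_functional _ (fun u => exists i, i != q /\ degLt i u) z.
  by move=> /homog_span_other_eq0 => /(_ Lt_graded z_deg) /eqP; apply/negP.
by exists phi; split => // i u iq hu; apply: phi_deg; exists i.
Qed.

Section Splitting.
Variable phi : Lt -> rat^o.
Hypotheses (phi_linear : is_linear phi) (phi_z : phi z = 1).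

Let phiZ r u : phi (r *: u) = r * phi u. Proof. exact: (linZ phi_linear). Qed.

Lemma ker_pi_coord u : pi u = 0 -> u = phi u *: z.
Proof. by move=> /ker_pi [c ->]; rewrite phiZ phi_z mulr1. Qed.

Lemma tensor_z_coord :
  exists rho : Tt -> A, is_linear rho /\ forall a u, rho (tt a u) = phi u *: a.
Proof.
have [_ /(_ A (fun a u => phi u *: a))] := hTt.
case=> [|rho [rho_linear rho_tensor _]]; last by exists rho.
split=> [a r u v | u r a b]; first by rewrite phi_linear scalerDl scalerA.
by rewrite scalerDr !scalerA mulrC.
Qed.

Lemma linear_section :
  exists s : L -> Lt, [/\ is_linear s, cancel s pi & forall w, phi (s w) = 0].
Proof.
have pi_z : pi z = 0 by apply/ker_pi; exists 1; rewrite scale1r.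
pose pre w := proj1_sig (boolp.cid (pi_surj w)).
have pi_pre w : pi (pre w) = w by rewrite /pre; case: boolp.cid.
pose s w := pre w - phi (pre w) *: z.
have pi_s : cancel s pi.
  by move=> w; rewrite (linB pi_linear) (linZ pi_linear) pi_z scaler0 subr0.
have phi_s w : phi (s w) = 0.
  by rewrite (linB phi_linear) phiZ phi_z mulr1 subrr.
clearbody s; exists s; split => // r w1 w2.
set e := s (r *: w1 + w2) - (r *: s w1 + s w2).
have pi_e : pi e = 0 by rewrite (linB pi_linear) pi_linear !pi_s subrr.
have phi_e : phi e = 0.
  by rewrite (linB phi_linear) (linD phi_linear) phiZ !phi_s mulr0 addr0.
by apply/eqP; rewrite -subr_eq0 -/e (ker_pi_coord pi_e) phi_e scale0r.
Qed.

Variable rho : Tt -> A.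
Hypotheses (rho_linear : is_linear rho) (rho_tensor : forall a u, rho (tt a u) = phi u *: a).

Lemma rho_tz a : rho (tt a z) = a.
Proof. by rewrite rho_tensor phi_z scale1r. Qed.

(* with s a section of pi killed by phi, (id (x) s) o P + (- (x) z) o rho agrees with
   the identity on pure tensors *)
Lemma ker_P_tz x : P x = 0 -> x = tt (rho x) z.
Proof.
have [s [s_linear pi_s phi_s]] := linear_section.
have [_ /(_ Tt (fun a w => tt a (s w)))] := hT.
case=> [|sigma [sigma_linear sigma_tensor _]].
  by split=> [a | w]; [exact: is_linear_comp s_linear (tt_bilinear.1 a) | exact: tt_bilinear.2].
have [g [_ _ g_uniq]] := hTt.2 _ tt tt_bilinear.
have decomp y : y = sigma (P y) + tt (rho y) z.
  transitivity (g y); first exact: g_uniq (@is_linear_id Tt) _ y.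
  symmetry; apply: (g_uniq (fun y => sigma (P y) + tt (rho y) z)).
    apply: is_linear_add (is_linear_comp P_linear sigma_linear) _.
    exact: is_linear_comp rho_linear (tt_bilinear.2 z).
  move=> a u; rewrite P_tensor sigma_tensor rho_tensor (linZ (tt_bilinear.2 z)).
  rewrite -(linZ (tt_bilinear.1 a)) -(linD (tt_bilinear.1 a)); congr (tt a _).
  have e : pi (u - s (pi u)) = 0 by rewrite (linB pi_linear) pi_s subrr.
  by have := ker_pi_coord e; rewrite (linB phi_linear) phi_s subr0 => <-; rewrite addrC subrK.
by move=> Px0; rewrite {1}(decomp x) Px0 (lin0 sigma_linear) add0r.
Qed.

Hypothesis phi_deg : forall i u, i != q -> degLt i u -> phi u = 0.

Lemma rho_homog n x : Gt n x -> degA (n - q) (rho x).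
Proof.
elim/span_ind => [|r v y [i [j [a [u [_ <- ha hu ->]]]]] IH].
  by rewrite (lin0 rho_linear); apply: deg0.
rewrite rho_linear rho_tensor; apply: degZD => //.
have [-> | jq] := eqVneq j q; last by rewrite (phi_deg jq hu) scale0r; apply: deg0.
by rewrite addrK; apply: degZ.
Qed.

End Splitting.

Lemma ker_P n x : Gt n x -> P x = 0 -> exists2 b, degA (n - q) b & x = tt b z.
Proof.
have [phi [phi_linear phi_z phi_deg]] := z_coord_functional.
have [rho [rho_linear rho_tensor]] := tensor_z_coord phi_linear.
move=> hx Px0; exists (rho x); first exact: rho_homog.
exact: ker_P_tz.
Qed.

Lemma tt_z_inj : injective (tt^~ z).
Proof.
have [phi [phi_linear phi_z _]] := z_coord_functional.
have [rho [rho_linear rho_tensor]] := tensor_z_coord phi_linear.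
by move=> a b /(congr1 rho); rewrite !(rho_tz phi_z rho_tensor).
Qed.

End CentralExtension.

Unset Implicit Arguments.

Theorem lemma3p6
  (* the commutative DGA A *)
  (A : lmodType rat) (degA : int -> A -> Prop) (mulA : A -> A -> A) (oneA : A)
  (dA : A -> A) (hA : is_cdga degA mulA oneA dA)
  (* the DGLAs L~ and L *)
  (L : lmodType rat) (degL : int -> L -> Prop) (brL : L -> L -> L) (dL : L -> L)
  (hL : is_dgla degL brL dL) (nilL : nilpotent brL) (npL : concentrated_nonpos degL)
  (Lt : lmodType rat) (degLt : int -> Lt -> Prop) (brLt : Lt -> Lt -> Lt) (dLt : Lt -> Lt)
  (hLt : is_dgla degLt brLt dLt) (nilLt : nilpotent brLt)
  (npLt : concentrated_nonpos degLt)
  (* the central extension 0 -> Z -> L~ -> L -> 0, with Z = Q z, z of degree q *)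
  (pi : Lt -> L) (hpi : is_dgla_morphism degLt brLt dLt degL brL dL pi)
  (pi_surj : forall w : L, exists u : Lt, pi u = w)
  (q : int) (z : Lt) (z_neq0 : z != 0) (z_deg : degLt q z)
  (kerpi : forall u : Lt, pi u = 0 <-> exists c : rat, u = c *: z)
  (z_central : forall u : Lt, brLt z u = 0)
  (z_closed : dLt z = 0)
  (im_dLt_Z : forall (u : Lt) (c : rat), dLt u = c *: z -> c = 0)
  (* the DGLAs A (x) L and A (x) L~, and id (x) pi *)
  (T : lmodType rat) (t : A -> L -> T) (brT : T -> T -> T) (dT : T -> T)
  (hT : is_tensor t) (hTd : is_tensor_dgla degA mulA dA degL brL dL t brT dT)
  (Tt : lmodType rat) (tt : A -> Lt -> Tt) (brTt : Tt -> Tt -> Tt) (dTt : Tt -> Tt)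
  (hTt : is_tensor tt) (hTtd : is_tensor_dgla degA mulA dA degLt brLt dLt tt brTt dTt)
  (P : Tt -> T) (hP : is_linear P) (hPt : forall a u, P (tt a u) = t a (pi u))
  (* the defining system alpha and X in (A^+ (x) L)^0 *)
  (alpha : T) (halpha : defining_system degA degL t brT dT alpha)
  (X : T) (hX : tdeg_pos degA degL t 0 X)
  (N : nat) (hN : iter N (brT X) (dT X + brT alpha X) = 0) :
  let beta := gauge brT dT N X alpha in
  defining_system degA degL t brT dT beta /\
  (* m(beta) = m(alpha) in H^{2-q}(A) *)
  (forall (alphat betat : Tt) (c c' : A),
      tdeg_pos degA degLt tt 1 alphat -> P alphat = alpha ->
      tdeg_pos degA degLt tt 1 betat -> P betat = beta ->
      MC_F brTt dTt alphat = tt c z -> MC_F brTt dTt betat = tt c' z ->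
      exists b : A, degA (1 - q) b /\ c' - c = dA b).
Proof.
move=> beta; have [[[Lt_graded _ _ _ _] _] [pi_linear _ _ _]] := (hLt, hpi).
split; first exact: (gauge_defining_system hA hL hT.1 hTd hX halpha hN).
move=> alphat betat c c' halt Palt hbet Pbet MCa MCb.
have [Xt hXt PXt] := tdeg_pos_lift hL hLt hpi hP hPt pi_surj hX.
have [K hK] := nilLt.
pose betah := gauge brTt dTt (K + N) Xt alphat.
have hMt := ad_iter_nilpotent hA hLt hTt.1 hTtd N hK hXt halt.
have hbh : tdeg_pos degA degLt tt 1 betah := tensor_gauge_homog hA hLt hTtd _ hXt halt.
have Pbh : P betah = beta.
  rewrite (P_gauge hA hLt hpi hTd hTtd hP hPt _ hXt halt) PXt Palt.
  exact: gauge_trunc (brT_bilinear hTd) (leq_addl K N) hN.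
have [b hb bz] : exists2 b, degA (1 - q) b & betat - betah = tt b z.
  apply: (ker_P hA hTt z_deg Lt_graded z_neq0 pi_linear pi_surj kerpi hT hP hPt).
    exact: spanB hbet hbh.
  by rewrite (linB hP) Pbet Pbh subrr.
have hbz : tdeg_pos degA degLt tt 1 (tt b z) by rewrite -bz; exact: spanB hbet hbh.
exists b; split => //; move: MCb; rewrite -[betat](subrK betah) bz addrC.
rewrite (MC_F_add_tz hA hLt hTt hTtd z_deg z_central z_closed hbh hbz).
rewrite (MC_F_gauge_tz hA hLt hTt hTtd z_deg z_central hXt halt hMt MCa).
rewrite -(linD (hTt.1.2 z)) => /(tt_z_inj hTt z_deg Lt_graded z_neq0) <-.
by rewrite addrC addKr.
Qed.
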